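(* Let $\mathcal{R}=(G_0,e\to R)$ be an expanding replacement system with limit space $X$ and rearrangement group $\mathcal{G}$. Then every finite subgroup of $\mathcal{G}$ is contained in $\mathrm{Aut}_{\mathcal{R}}(E)$ for some expansion $E$ of $G_0$.
   Context: A graph means a finite directed multigraph (loops, multiple edges allowed); isomorphisms preserve directions. A replacement system $\mathcal{R}=(G_0,e\to R)$: $G_0$ a graph, $e$ a non-loop directed edge from $v$ to $w$, $R$ a graph containing $v,w$ (initial and terminal vertices). Replacing an edge $\varepsilon$ of a graph means deleting it and gluing in a copy of $R$ with initial/terminal vertices identified with those of $\varepsilon$; new edges are named $\varepsilon\zeta$ ($\zeta\in E(R)$). An expansion of $G_0$ is a graph obtained by finitely many replacements; its edges are words $\varepsilon_0\varepsilon_1\cdots\varepsilon_n$. $G_n$ denotes the graph obtained by replacing all edges $n$ times. $\mathcal{R}$ is expanding if neither $G_0$ nor $R$ has isolated vertices, the initial and terminal vertices of $R$ are not adjacent, and $R$ has at least three vertices and two edges. $\Omega=E(G_0)\times E(R)^{\mathbb{N}}$; $\varepsilon_0\varepsilon_1\cdots\sim\varepsilon'_0\varepsilon'_1\cdots$ iff for all $n$ the edges $\varepsilon_0\cdots\varepsilon_n$ and $\varepsilon'_0\cdots\varepsilon'_n$ of $G_n$ share a vertex; $X=\Omega/\sim$. The cell $C(e')$ of an edge $e'$ of an expansion is the image of all sequences with prefix $e'$; its interior excludes the (images of the) endpoints of $e'$. For $e',e''$ both loops or both non-loops, the canonical homeomorphism $C(e')\to C(e'')$ is induced by $e'\zeta_1\zeta_2\cdots\mapsto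 e''\zeta_1\zeta_2\cdots$. A rearrangement of $X$ is a homeomorphism $X\to X$ restricting to a canonical homeomorphism on each cell of some finite cover of $X$ by cells with disjoint interiors; $\mathcal{G}$ is the group of all rearrangements. For an expansion $E$ of $G_0$, $\mathrm{Aut}_{\mathcal{R}}(E)$ is the subgroup of $\mathcal{G}$ consisting of all rearrangements $f$ for which there is a directed graph automorphism $\varphi$ of $E$ such that $f$ maps $C(\epsilon)$ canonically onto $C(\varphi(\epsilon))$ for each edge $\epsilon$ of $E$. *)

From mathcomp Require Import all_boot.
Set Implicit Arguments.
Unset Strict Implicit.
Unset Printing Implicit Defensive.

Record graph := Graph {
  gV : finType;
  gE : finType;
  gsrc : gE -> gV;
  gtgt : gE -> gV }.

(* A replacement system (G0, e -> R): ini/ter are the initial and terminal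
   vertices v, w of R (the endpoints of the formal edge e). *)
Record repl_system := RSys {
  G0 : graph;
  Rg : graph;
  ini : gV Rg;
  ter : gV Rg }.

Section ReplacementSystem.
Variable RS : repl_system.

Local Notation E0 := (gE (G0 RS)).
Local Notation V0 := (gV (G0 RS)).
Local Notation ER := (gE (Rg RS)).
Local Notation VR := (gV (Rg RS)).

(* e is a non-loop edge: v <> w *)
Definition is_repl_system : Prop := ini RS <> ter RS.

Definition expanding : Prop :=
  is_repl_system /\
  (forall v : V0, exists e : E0, gsrc e = v \/ gtgt e = v) /\
  (forall v : VR, exists z : ER, gsrc z = v \/ gtgt z = v) /\
  (forall z : ER, ~ (gsrc z = ini RS /\ gtgt z = ter RS) /\
                  ~ (gsrc z = ter RS /\ gtgt z = ini RS)) /\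
  (3 <= #|VR|) /\ (2 <= #|ER|).

(* Edges of expansions are words e0 z1 ... zn. *)
Definition word := (E0 * seq ER)%type.

(* Vertices of expansions: vertices of G0, or the copy of an (interior)
   vertex u of R glued in when replacing the edge w. *)
Definition vtx := (V0 + (word * VR))%type.

(* endpoint (b = false: source, b = true: target) of the word e0 (rev rzs) *)
Fixpoint ep_rev (e0 : E0) (rzs : seq ER) (b : bool) : vtx :=
  match rzs with
  | [::] => inl (if b then gtgt e0 else gsrc e0)
  | z :: r =>
      let u := if b then gtgt z else gsrc z in
      if u == ini RS then ep_rev e0 r false
      else if u == ter RS then ep_rev e0 r true
      else inr ((e0, rev r), u)
  end.

Definition ep (w : word) (b : bool) : vtx := ep_rev w.1 (rev w.2) b.

Definition is_loop (w : word) : Prop := ep w false = ep w true.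

Definition share_vertex (w w' : word) : Prop :=
  exists b b', ep w b = ep w' b'.

Definition Omega := (E0 * (nat -> ER))%type.

(* the edge eps_0 eps_1 ... eps_n of G_n *)
Definition pref (om : Omega) (n : nat) : word := (om.1, mkseq om.2 n).

Definition sim (om om' : Omega) : Prop :=
  forall n, share_vertex (pref om n) (pref om' n).

Definition cls (om : Omega) : Omega -> Prop := fun om' => sim om om'.

Definition X := { A : Omega -> Prop | exists om, A = cls om }.

Definition proj (om : Omega) : X := exist _ (cls om) (ex_intro _ om erefl).

(* product topology on Omega (discrete factors) and quotient topology on X *)
Definition agree (n : nat) (om om' : Omega) : Prop :=
  om.1 = om'.1 /\ forall i, i < n -> om.2 i = om'.2 i.

Definition openO (U : Omega -> Prop) : Prop :=
  forall om, U om -> exists n, forall om', agree n om om' -> U om'.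

Definition openX (U : X -> Prop) : Prop := openO (fun om => U (proj om)).

Definition continuousX (f : X -> X) : Prop :=
  forall U, openX U -> openX (fun x => U (f x)).

Definition homeoX (f : X -> X) : Prop :=
  exists g : X -> X, (forall x, g (f x) = x) /\ (forall x, f (g x) = x) /\
    continuousX f /\ continuousX g.

Definition hasprefix (om : Omega) (w : word) : Prop := pref om (size w.2) = w.

Definition cell (w : word) (x : X) : Prop :=
  exists om, hasprefix om w /\ x = proj om.

(* x is the image in X of the vertex p *)
Definition vertex_point (p : vtx) (x : X) : Prop :=
  exists om, x = proj om /\ exists m, forall n, m <= n ->
    ep (pref om n) false = p \/ ep (pref om n) true = p.

Definition interior (w : word) (x : X) : Prop :=
  cell w x /\ forall b, ~ vertex_point (ep w b) x.

(* the canonical map on sequences: w z1 z2 ... |-> w' z1 z2 ... *)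
Definition canon (w w' : word) (om : Omega) : Omega :=
  (w'.1, fun i => if i < size w'.2 then nth (om.2 0) w'.2 i
                  else om.2 (i - size w'.2 + size w.2)).

Definition canon_on (f : X -> X) (w w' : word) : Prop :=
  (is_loop w <-> is_loop w') /\
  forall om, hasprefix om w -> f (proj om) = proj (canon w w' om).

Definition rearrangement (f : X -> X) : Prop :=
  homeoX f /\
  exists cov : seq (word * word),
    (forall x, exists c, c \in cov /\ cell c.1 x) /\
    (forall c1 c2 s1 s2 s3, cov = s1 ++ c1 :: s2 ++ c2 :: s3 ->
       forall x, ~ (interior c1.1 x /\ interior c2.1 x)) /\
    (forall c, c \in cov -> canon_on f c.1 c.2).

(* expansions of G0, given by their edge sets *)
Inductive expansion : seq word -> Prop :=
| exp0 : expansion [seq (e, [::]) | e <- enum E0]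
| expS (S : seq word) (w : word) : expansion S -> w \in S ->
    expansion ([seq w' <- S | w' != w] ++ [seq (w.1, rcons w.2 z) | z <- enum ER]).

Definition is_vtx (S : seq word) (p : vtx) : Prop :=
  match p with
  | inl _ => True
  | inr (w, u) => u <> ini RS /\ u <> ter RS /\
      exists w', w' \in S /\ w'.1 = w.1 /\ size w.2 < size w'.2 /\
                 take (size w.2) w'.2 = w.2
  end.

Definition bij_on (T : Type) (P : T -> Prop) (s : T -> T) : Prop :=
  exists s' : T -> T, forall t, P t ->
    P (s t) /\ P (s' t) /\ s' (s t) = t /\ s (s' t) = t.

(* directed graph automorphism of the expansion with edge set S,
   given by its edge map sigma (and some vertex map tau) *)
Definition graph_aut (S : seq word) (sigma : word -> word) : Prop :=
  exists tau : vtx -> vtx,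
    bij_on (fun w => w \in S) sigma /\ bij_on (is_vtx S) tau /\
    forall w, w \in S -> forall b, ep (sigma w) b = tau (ep w b).

Definition in_Aut (S : seq word) (f : X -> X) : Prop :=
  rearrangement f /\
  exists sigma, graph_aut S sigma /\
    forall w, w \in S -> forall om, hasprefix om w ->
      f (proj om) = proj (canon w (sigma w) om).

End ReplacementSystem.

(* A rearrangement is canonical on every deep enough cell, with a unique target
   word: the points [w z t] with a suitable "rigid" tail [t] are equivalent to
   no other sequence, so they pin the image of [w] down. As the group is finite,
   there are [M] and [C] such that each of its elements maps every word of
   length at least [M] canonically onto a word at most [C] longer. Call a word
   good if, for every element [f], it extends the [f]-image of some word of
   length [M]. The group permutes good words (this is where closure under
   products and inverses enters) and all words longer than [M + C] are good,
   so the minimal good words are the edges of an expansion that the group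
   permutes. These permutations respect endpoints, since two edges share a
   vertex iff the canonical sequences running from them into that vertex are
   equivalent, and rearrangements preserve equivalence. *)

From mathcomp Require Import all_boot zify.
From Stdlib Require Import Classical ClassicalEpsilon FunctionalExtensionality
  PropExtensionality ProofIrrelevance.

Set Implicit Arguments.
Unset Strict Implicit.
Unset Printing Implicit Defensive.

Section Words.
Variable RS : repl_system.
Local Notation ER := (gE (Rg RS)).
Local Notation VR := (gV (Rg RS)).
Local Notation wrd := (word RS).
Local Notation ep := (@ep RS).
Local Notation Om := (Omega RS).

Definition ext (w : wrd) (s : seq ER) : wrd := (w.1, w.2 ++ s).

Lemma ext_nil w : ext w [::] = w.
Proof. by rewrite /ext cats0 -surjective_pairing. Qed.

Lemma ext_cat w s1 s2 : ext (ext w s1) s2 = ext w (s1 ++ s2).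
Proof. by rewrite /ext /= catA. Qed.

Lemma size_ext w s : size (ext w s).2 = size w.2 + size s.
Proof. by rewrite /ext size_cat. Qed.

Lemma ext_take_drop w n : ext (w.1, take n w.2) (drop n w.2) = w.
Proof. by rewrite /ext /= cat_take_drop -surjective_pairing. Qed.

Lemma take_ext_size w s : ((ext w s).1, take (size w.2) (ext w s).2) = w.
Proof. by rewrite /ext /= take_size_cat // -surjective_pairing. Qed.

Definition role (b : bool) : VR := if b then ter RS else ini RS.

Definition endR (z : ER) (b : bool) : VR := if b then gtgt z else gsrc z.

(* An endpoint of [z] glued to the initial (terminal) vertex of R is the
   source (target) of [w]; any other one is a new vertex born with [w]. *)
Definition child_ep (w : wrd) (z : ER) (b : bool) : vtx RS :=
  if endR z b == ini RS then ep w false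
  else if endR z b == ter RS then ep w true else inr (w, endR z b).

Lemma ep_rcons w z b : ep (w.1, rcons w.2 z) b = child_ep w z b.
Proof.
by rewrite /ep /child_ep /endR /= rev_rcons /= revK -surjective_pairing; case: b.
Qed.

Lemma ep_ext1 w z b : ep (ext w [:: z]) b = child_ep w z b.
Proof. by rewrite /ext cats1 ep_rcons. Qed.

Lemma child_epP w z b :
  [\/ endR z b = ini RS /\ child_ep w z b = ep w false,
      endR z b = ter RS /\ child_ep w z b = ep w true |
      [/\ endR z b <> ini RS, endR z b <> ter RS &
          child_ep w z b = inr (w, endR z b)]].
Proof.
rewrite /child_ep; case: eqP => Hi; first by constructor 1.
by case: eqP => Ht; [constructor 2 | constructor 3].
Qed.

Lemma ep_inr_prefix w b p u : ep w b = inr (p, u) ->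
  [/\ p.1 = w.1, exists z s, w.2 = p.2 ++ z :: s, u != ini RS & u != ter RS].
Proof.
case: w => e s; elim/last_ind: s b => [|s z IH] b //=.
rewrite (ep_rcons (e, s)) /child_ep.
have grow : ep (e, s) _ = inr (p, u) -> [/\ p.1 = e,
    exists z' s', rcons s z = p.2 ++ z' :: s', u != ini RS & u != ter RS].
  move=> b' /IH [-> [z' [s' /= ->]] Hi Ht]; split => //.
  by exists z', (rcons s' z); rewrite rcons_cat.
case: ifP => [_|Hi]; first exact: grow.
case: ifP => [_|Ht]; first exact: grow.
move=> [<- <-]; split => //; last by rewrite Ht.
  by exists z, [::]; rewrite cats1.
by rewrite Hi.
Qed.

Lemma ep_inr_size w b p u : ep w b = inr (p, u) -> size p.2 < size w.2.
Proof.
by case/ep_inr_prefix => _ [z [s ->]] _ _; rewrite size_cat /= addnS ltnS leq_addr.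
Qed.

Lemma ep_take w b n : n <= size w.2 ->
  (exists b', ep (w.1, take n w.2) b' = ep w b) \/
  (exists p u, [/\ ep w b = inr (p, u), n <= size p.2, take n w.2 = take n p.2
                 & w.1 = p.1]).
Proof.
case: w => e s; elim/last_ind: s b n => [|s z IH] b n /=.
  by rewrite leqn0 => /eqP ->; left; exists b.
rewrite size_rcons => Hn.
case: (ltngtP n (size s).+1) Hn => // Hn _; last first.
  by left; exists b; rewrite Hn take_oversize ?size_rcons.
rewrite -cats1 takel_cat // cats1 (ep_rcons (e, s)) /child_ep.
case: ifP => _; first exact: IH.
case: ifP => _; first exact: IH.
by right; exists (e, s), (endR z b).
Qed.

Definition seqapp (s : seq ER) (t : nat -> ER) : nat -> ER :=
  fun i => if i < size s then nth (t 0) s i else t (i - size s).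

Definition app (w : wrd) (t : nat -> ER) : Om := (w.1, seqapp w.2 t).

Lemma mkseq_add (T : Type) (f : nat -> T) a b :
  mkseq f (a + b) = mkseq f a ++ mkseq (fun i => f (a + i)) b.
Proof.
apply: (@eq_from_nth _ (f 0)); first by rewrite size_cat !size_mkseq.
move=> i; rewrite size_mkseq => Hi.
rewrite nth_mkseq // nth_cat size_mkseq; case: ltnP => Hia; first by rewrite nth_mkseq.
by rewrite nth_mkseq ?subnKC // ltn_subLR.
Qed.

Lemma seqapp_cat s1 s2 t : seqapp (s1 ++ s2) t = seqapp s1 (seqapp s2 t).
Proof.
apply: functional_extensionality => i; rewrite /seqapp size_cat nth_cat.
case: (ltnP i (size s1)) => H1.
  by rewrite (ltn_addr (size s2) H1) (set_nth_default (t 0)).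
by rewrite -(ltn_subLR _ H1); case: ifP => // _; rewrite subnDA.
Qed.

Lemma app_ext w s t : app (ext w s) t = app w (seqapp s t).
Proof. by rewrite /app /ext /= seqapp_cat. Qed.

Lemma mkseq_seqapp s t k : mkseq (seqapp s t) (size s + k) = s ++ mkseq t k.
Proof.
rewrite mkseq_add; congr (_ ++ _).
  apply: (@eq_from_nth _ (t 0)); first by rewrite size_mkseq.
  by move=> i; rewrite size_mkseq => Hi; rewrite nth_mkseq // /seqapp Hi.
by apply: eq_mkseq => i; rewrite /seqapp ltnNge leq_addr /= addKn.
Qed.

Lemma pref_app_ge w t n : size w.2 <= n ->
  pref (app w t) n = ext w (mkseq t (n - size w.2)).
Proof. by move=> H; rewrite /pref /app /ext /= -{1}(subnKC H) mkseq_seqapp. Qed.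

Lemma pref_app_le w t n : n <= size w.2 -> pref (app w t) n = (w.1, take n w.2).
Proof.
move=> H; rewrite /pref /app /=; congr (_, _).
apply: (@eq_from_nth _ (t 0)); first by rewrite size_mkseq size_takel.
move=> i; rewrite size_mkseq => Hi.
by rewrite nth_mkseq // nth_take // /seqapp (leq_trans Hi H).
Qed.

Lemma hasprefix_app w t : hasprefix (app w t) w.
Proof. by rewrite /hasprefix pref_app_le // take_size -surjective_pairing. Qed.

Lemma hasprefixP om w : hasprefix om w -> exists t, om = app w t.
Proof.
rewrite /hasprefix /pref; case: om => e f; case: w => e' s /= [<- Hw].
exists (fun i => f (i + size s)); rewrite /app /=; congr (_, _).
apply: functional_extensionality => i; rewrite /seqapp.
case: ifP => Hi; last by rewrite subnK // leqNgt Hi.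
by rewrite -[in RHS]Hw nth_mkseq.
Qed.

Lemma canon_app w w' t : canon w w' (app w t) = app w' t.
Proof.
rewrite /canon /app /=; congr (_, _); apply: functional_extensionality => i.
rewrite /seqapp; case: ifP => Hi; first by rewrite (set_nth_default (t 0)).
by rewrite ltnNge leq_addl /= addnK.
Qed.

Lemma pref_S (om : Om) n : pref om n.+1 = ext (pref om n) [:: om.2 n].
Proof. by rewrite /pref /ext /= mkseqS cats1. Qed.

Lemma size_pref (om : Om) n : size (pref om n).2 = n.
Proof. exact: size_mkseq. Qed.

Lemma sim_refl (om : Om) : sim om om.
Proof. by move=> n; exists false, false. Qed.

Lemma sim_sym (om om' : Om) : sim om om' -> sim om' om.
Proof. by move=> H n; have [b [b' E]] := H n; exists b', b. Qed.

Lemma proj_eq_sim (om om' : Om) : proj om = proj om' -> sim om om'.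
Proof.
move=> /(f_equal (@proj1_sig _ _)) /= E.
have : cls om' om' by exact: sim_refl.
by rewrite -E.
Qed.

Lemma shared_child_ep A B z z' b b' : size A.2 = size B.2 -> A <> B ->
  ep (ext A [:: z]) b = ep (ext B [:: z']) b' ->
  (exists s, endR z b = role s) /\ exists b1, ep (ext A [:: z]) b = ep A b1.
Proof.
move=> Hs HAB; rewrite !ep_ext1.
have HB b2 : inr (A, endR z b) <> ep B b2.
  by move=> E; have := ep_inr_size (esym E); rewrite Hs ltnn.
case: (child_epP A z b) => [[-> ->]|[-> ->]|[_ _ ->]].
- by split; [exists false | exists false].
- by split; [exists true | exists true].
case: (child_epP B z' b') => [[_ ->]|[_ ->]|[_ _ ->]]; try by move/HB.
by case.
Qed.

End Words.

Section MinimalWords.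
Variable RS : repl_system.
Local Notation E0 := (gE (G0 RS)).
Local Notation ER := (gE (Rg RS)).
Local Notation wrd := (word RS).

Definition minimal (P : wrd -> Prop) (w : wrd) :=
  P w /\ forall j, j < size w.2 -> ~ P (w.1, take j w.2).

Lemma exists_filter (T : eqType) (Q : T -> Prop) (s : seq T) :
  exists s' : seq T, forall x, x \in s' <-> x \in s /\ Q x.
Proof.
elim: s => [|x s [s' Hs']]; first by exists [::] => v; split => [|[]].
case: (classic (Q x)) => Hx; [exists (x :: s') | exists s'] => v; rewrite !in_cons.
  split; first by case/orP => [/eqP -> | /Hs' [-> HQ]]; rewrite ?eqxx ?orbT.
  case=> /orP [/eqP -> _ | Hv HQ]; first by rewrite eqxx.
  by apply/orP; right; apply/Hs'.
split; first by move/Hs' => [-> HQ]; rewrite orbT.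
by case=> /orP [/eqP E | Hv] HQ; [rewrite E in HQ | apply/Hs'].
Qed.

Lemma mem_children (w v : wrd) :
  v \in [seq (w.1, rcons w.2 z) | z <- enum ER] <-> exists z, v = ext w [:: z].
Proof.
split; first by move/mapP => [z _ ->]; exists z; rewrite /ext cats1.
by move=> [z ->]; apply/mapP; exists z; rewrite ?mem_enum // /ext cats1.
Qed.

Lemma expansion_split_all (Bad S : seq wrd) k : expansion S -> uniq Bad ->
  (forall w, w \in Bad -> w \in S /\ size w.2 = k) ->
  exists S', expansion S' /\ forall v, v \in S' <->
    (v \in S /\ v \notin Bad) \/ (exists w z, w \in Bad /\ v = ext w [:: z]).
Proof.
elim: Bad S => [|w Bad IH] S HS Hu Hall.
  exists S; split => // v; split; first by left.
  by case => [[]|[w [z []]]].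
move: Hu => /= /andP [Hw Hu]; have [HwS Hwk] := Hall w (mem_head _ _).
set S1 := [seq w' <- S | w' != w] ++ [seq (w.1, rcons w.2 z) | z <- enum ER].
have HS1 : expansion S1 by apply: expS.
have Hall1 w' : w' \in Bad -> w' \in S1 /\ size w'.2 = k.
  move=> Hw'; have [H1 H2] := Hall w' (mem_behead (s := w :: Bad) Hw'); split => //.
  rewrite mem_cat mem_filter H1 andbT; apply/orP; left.
  by apply: contraNneq Hw => <-.
have [S' [HS' Hm]] := IH S1 HS1 Hu Hall1.
exists S'; split => // v; rewrite Hm.
have Hsz z : ext w [:: z] \notin Bad.
  by apply/negP => /Hall1 [_]; rewrite size_ext /= Hwk; lia.
split.
  case => [[Hv1 Hv2]|[w' [z [Hw' ->]]]].
    move: Hv1; rewrite mem_cat mem_filter => /orP [/andP [Hne HvS]|Hch].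
      by left; split => //; rewrite in_cons negb_or Hne.
    have [z ->] := (mem_children w v).1 Hch.
    by right; exists w, z; split => //; exact: mem_head.
  by right; exists w', z; split => //; rewrite in_cons Hw' orbT.
case => [[HvS]|[w' [z [Hw' ->]]]].
  rewrite in_cons negb_or => /andP [Hne Hnb]; left; split => //.
  by rewrite mem_cat mem_filter Hne HvS.
move: Hw'; rewrite in_cons => /orP [/eqP ->|Hb].
  left; split; last exact: Hsz.
  by rewrite mem_cat; apply/orP; right; apply/mem_children; exists z.
by right; exists w', z.
Qed.

Variable P : wrd -> Prop.

(* Truncation at depth [k] lets the expansion be grown level by level. *)
Definition truncated k (w : wrd) := P w \/ k <= size w.2.

Lemma minimal_truncated_size k w : minimal (truncated k) w -> ~ P w -> size w.2 = k.
Proof.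
move=> [[HP|Hk] Hmin] HnP //; apply/eqP; rewrite eqn_leq Hk andbT leqNgt.
by apply/negP => Hlt; apply: (Hmin k Hlt); right; rewrite /= size_take Hlt.
Qed.

Lemma minimal_truncatedS k v : minimal (truncated k.+1) v <->
  (minimal (truncated k) v /\ P v) \/
  (exists w z, (minimal (truncated k) w /\ ~ P w) /\ v = ext w [:: z]).
Proof.
split.
  move=> [HPv Hmin]; case: (leqP (size v.2) k) => Hs.
    left; case: HPv => [HPv|Hk]; last by move: (leq_trans Hk Hs); rewrite ltnn.
    split => //; split; first by left.
    move=> j Hj [H|H]; first by apply: (Hmin j Hj); left.
    move: H; rewrite /= size_take Hj => Hkj.
    by have := leq_ltn_trans Hkj (leq_trans Hj Hs); rewrite ltnn.
  have Hs1 : size v.2 = k.+1.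
    apply/eqP; rewrite eqn_leq Hs andbT leqNgt; apply/negP => H.
    by apply: (Hmin k.+1 H); right; rewrite /= size_take H.
  have Hd : size (drop k v.2) = 1 by rewrite size_drop Hs1 subSnn.
  case Edr: (drop k v.2) Hd => [|z [|z' s']] // _.
  right; exists (v.1, take k v.2), z; split; last by rewrite -Edr ext_take_drop.
  split; last by move=> /= HP; apply: (Hmin k); [rewrite Hs1 | left].
  split; first by right; rewrite /= size_take Hs1 ltnSn.
  move=> j; rewrite /= size_take Hs1 ltnSn => Hj [H|H].
    by apply: (Hmin j); [rewrite Hs1 ltnS ltnW | left; rewrite take_takel ?(ltnW Hj) in H].
  move: H; rewrite /= !size_take Hs1 ltnSn Hj => Hkj.
  by have := leq_ltn_trans Hkj Hj; rewrite ltnn.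
case => [[[HPv Hmin] HP]|[w [z [[[HPw Hmin] HnP] ->]]]].
  split; first by left.
  by move=> j Hj [H|H]; apply: (Hmin j Hj); [left | right; exact: ltnW].
have Hw : size w.2 = k by apply: minimal_truncated_size.
split; first by right; rewrite size_ext Hw addn1.
move=> j; rewrite size_ext Hw addn1 ltnS => Hj.
rewrite /ext /= takel_cat ?Hw // => -[H|H].
  case: (ltngtP j k) Hj => // [Hjk|Hjk] _; first by apply: (Hmin j); [rewrite Hw | left].
  by apply: HnP; rewrite Hjk -Hw take_size -surjective_pairing in H.
move: H; rewrite size_take Hw; case: ifP => [_ Hkj | _]; last by rewrite ltnn.
by have := leq_trans Hkj Hj; rewrite ltnn.
Qed.

Lemma expansion_minimal_truncated k :
  exists S, expansion S /\ forall w, w \in S <-> minimal (truncated k) w.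
Proof.
elim: k => [|k [S [HS Hm]]].
  exists [seq (e, [::]) | e <- enum E0]; split; first exact: exp0.
  move=> w; split; first by move/mapP => [e _ ->]; split; [right | move=> j].
  move=> [_ Hmin]; apply/mapP; exists w.1; rewrite ?mem_enum //.
  case: w Hmin => e [|z s] Hmin //=.
  by case: (Hmin 0) => //; right.
have [Bad0 HBad0] := exists_filter (fun w => ~ P w) S.
pose Bad := undup Bad0.
have HBad w : w \in Bad <-> w \in S /\ ~ P w by rewrite mem_undup.
have Hall w : w \in Bad -> w \in S /\ size w.2 = k.
  by move=> /HBad [H1 H2]; split => //; apply: minimal_truncated_size => //; exact/Hm.
have [S' [HS' Hm']] := expansion_split_all HS (undup_uniq Bad0) Hall.
exists S'; split => // v; rewrite Hm' minimal_truncatedS; split.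
  case => [[H1 H2]|[w [z [/HBad [H1 H2] ->]]]].
    left; split; first exact/Hm.
    by apply: NNPP => HnP; move/negP: H2; apply; apply/HBad.
  by right; exists w, z; split => //; split => //; exact/Hm.
case => [[H1 H2]|[w [z [[H1 H2] ->]]]].
  by left; split; [exact/Hm | apply/negP => /HBad []].
by right; exists w, z; split => //; apply/HBad; split => //; exact/Hm.
Qed.

Lemma expansion_minimal k : (forall w, k <= size w.2 -> P w) ->
  exists S, expansion S /\ forall w, w \in S <-> minimal P w.
Proof.
move=> Hk; have [S [HS Hm]] := expansion_minimal_truncated k.
exists S; split => // w; rewrite Hm /minimal /truncated.
have E v : P v \/ k <= size v.2 <-> P v by split => [[|/Hk]|] //; left.
by split => -[H1 H2]; split => [|j Hj /E]; try exact/E; apply: H2.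
Qed.
End MinimalWords.

Section Expanding.
Variable RS : repl_system.
Hypothesis Hexp : expanding RS.
Local Notation E0 := (gE (G0 RS)).
Local Notation V0 := (gV (G0 RS)).
Local Notation ER := (gE (Rg RS)).
Local Notation VR := (gV (Rg RS)).
Local Notation wrd := (word RS).
Local Notation ep := (@ep RS).
Local Notation Om := (Omega RS).
Local Notation role := (@role RS).

Lemma ini_neq_ter : ini RS <> ter RS.
Proof. by case: Hexp. Qed.

Lemma no_ini_ter_edge z : ~ (endR z false = ini RS /\ endR z true = ter RS) /\
                          ~ (endR z false = ter RS /\ endR z true = ini RS).
Proof. by case: Hexp => _ [_ [_ [/(_ z) H _]]]. Qed.

Lemma endRP (v : VR) : exists z b, endR z b = v.
Proof.
by case: Hexp => _ [_ [/(_ v) [z [Hz|Hz]] _]]; [exists z, false | exists z, true].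
Qed.

Lemma ep_G0P (v : V0) : exists e b, ep (e, [::]) b = inl v.
Proof.
by case: Hexp => _ [/(_ v) [e [He|He]] _]; [exists e, false | exists e, true];
  rewrite -He.
Qed.

Lemma interior_vertex : exists m : VR, m <> ini RS /\ m <> ter RS.
Proof.
case: Hexp => _ [_ [_ [_ [/card_gt2P [a [b [d [_ [/eqP Hab /eqP Hbd /eqP Hda]]]]] _]]]].
case: (classic (a = ini RS \/ a = ter RS)) => Ha; last first.
  by exists a; split => E; apply: Ha; [left | right].
case: (classic (b = ini RS \/ b = ter RS)) => Hb; last first.
  by exists b; split => E; apply: Hb; [left | right].
exists d; split => E; subst d;
  by case: Ha => Ha; case: Hb => Hb; subst; try done; apply: ini_neq_ter.
Qed.

Lemma two_edges : exists y1 y2 : ER, y1 <> y2.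
Proof.
case: Hexp => _ [_ [_ [_ [_ /card_gt1P [a [b [_ _ Hab]]]]]]].
by exists a, b; apply/eqP.
Qed.

(* No edge of R joins the initial and the terminal vertex. *)
Lemma role_touch z q q' s s' : endR z q = role s -> endR z q' = role s' -> s = s'.
Proof.
have [Ha Hb] := no_ini_ter_edge z; have Hit := ini_neq_ter.
case: s; case: s'; case: q; case: q' => //= H1 H2; exfalso;
  by [apply: Hit; rewrite -H1 -H2 | apply: Ha | apply: Hb].
Qed.

Lemma child_ep_attached w z x x' : (exists s, endR z x = role s) ->
  (exists s', endR z x' = role s') -> child_ep w z x = child_ep w z x'.
Proof.
move=> [s Hs] [s' Hs'].
by rewrite /child_ep Hs Hs' (role_touch Hs Hs').
Qed.

(* If [a] and [b] differ at level [n], their endpoints shared at level [n+1]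
   are inherited from level [n], and likewise for [b] and [c]; as no edge of R
   joins its initial and terminal vertices, the two inherited endpoints of
   [b]'s edge are the same. *)
Lemma sim_trans (a b c : Om) : sim a b -> sim b c -> sim a c.
Proof.
move=> Hab Hbc n.
case: (classic (pref a n = pref b n)) => [-> | Eab]; first exact: Hbc.
case: (classic (pref b n = pref c n)) => [<- | Ebc]; first exact: Hab.
have [x1 [x2 Hx]] := Hab n.+1; rewrite !pref_S in Hx.
have [y1 [y2 Hy]] := Hbc n.+1; rewrite !pref_S in Hy.
have Hs (u v : Om) : size (pref u n).2 = size (pref v n).2 by rewrite !size_pref.
have [_ [a1 Ea]] := shared_child_ep (Hs _ _) Eab Hx.
have [Hzx _] := shared_child_ep (Hs _ _) (nesym Eab) (esym Hx).
have [Hzy _] := shared_child_ep (Hs _ _) Ebc Hy.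
have [_ [c2 Ec]] := shared_child_ep (Hs _ _) (nesym Ebc) (esym Hy).
exists a1, c2; rewrite -Ea Hx -Ec -Hy !ep_ext1.
exact: child_ep_attached.
Qed.

Lemma proj_eqP (om om' : Om) : proj om = proj om' <-> sim om om'.
Proof.
split; first exact: proj_eq_sim.
move=> H; rewrite /proj; move: (ex_intro _ om _) (ex_intro _ om' _).
suff -> : cls om = cls om' by move=> p1 p2; rewrite (proof_irrelevance _ p1 p2).
apply: functional_extensionality => x; apply: propositional_extensionality.
by split => Hx; [exact: sim_trans (sim_sym H) Hx | exact: sim_trans H Hx].
Qed.

Definition young (K : nat) (v : vtx RS) := exists p u, v = inr (p, u) /\ K <= size p.2.

Lemma young_child w z b K : K <= size w.2 -> (forall b', young K (ep w b')) ->
  young K (ep (ext w [:: z]) b).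
Proof.
move=> Hw Hy; rewrite ep_ext1.
by case: (child_epP w z b) => [[_ ->]|[_ ->]|[_ _ ->]] //; exists w, (endR z b).
Qed.

Definition rigid (om : Om) := forall om', proj om' = proj om -> om' = om.

(* An equivalent sequence shares an endpoint with [om] at every level, and a
   young shared endpoint forces a long common prefix. *)
Lemma young_rigid (om : Om) :
  (forall K, exists n, forall b, young K (ep (pref om n) b)) -> rigid om.
Proof.
move=> HY om' /proj_eq_sim Hs.
have key i : om'.1 = om.1 /\ om'.2 i = om.2 i.
  have [n Hn] := HY i.+1; have [b [b' E]] := Hs n.
  have [p [u [E1 Hp]]] := Hn b'.
  have E2 : ep (pref om' n) b = inr (p, u) by rewrite E.
  have [Ha1 [z [s Ha2]] _ _] := ep_inr_prefix E1.
  have [Hb1 [z' [s' Hb2]] _ _] := ep_inr_prefix E2.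
  split; first by rewrite /= in Ha1 Hb1; rewrite -Hb1 Ha1.
  have Hin : i < n by have := ep_inr_size E1; rewrite size_pref; exact: ltn_trans Hp.
  have := f_equal (nth (om.2 0) ^~ i) Ha2; have := f_equal (nth (om.2 0) ^~ i) Hb2.
  by rewrite /pref /= !nth_mkseq // !nth_cat Hp => -> ->; apply: set_nth_default.
case: om' key {Hs} => e f key; case: om key {HY} => e0 f0 key.
have [/= -> _] := key 0; congr (_, _); apply: functional_extensionality => i.
by case: (key i).
Qed.

Section RigidPattern.
Variables (zc y : ER) (c : bool).
Hypothesis Hzc : endR zc c <> ini RS /\ endR zc c <> ter RS.
Hypothesis Hy : exists q, endR y q = role c.

(* The vertex [endR zc c] of the first copy of R is interior, and [y] is
   attached to it, so both endpoints of [W zc y] are born after [W]. *)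
Lemma young_zc_y W b : young (size W.2) (ep (ext W [:: zc; y]) b).
Proof.
have [q Hq] := Hy.
have Hc : young (size W.2) (ep (ext W [:: zc]) c).
  rewrite ep_ext1; case: (child_epP W zc c) => [[E _]|[E _]|[_ _ ->]].
  - by case: Hzc.
  - by case: Hzc.
  by exists W, (endR zc c).
have -> : ext W [:: zc; y] = ext (ext W [:: zc]) [:: y] by rewrite ext_cat.
rewrite ep_ext1.
case: (child_epP (ext W [:: zc]) y b) => [[E ->]|[E ->]|[_ _ ->]].
- by rewrite -(role_touch Hq (E : endR y b = role false)).
- by rewrite -(role_touch Hq (E : endR y b = role true)).
by exists (ext W [:: zc]), (endR y b); rewrite size_ext leq_addr.
Qed.

Definition rigid_tail : nat -> ER := fun i => if i %% 3 == 1 then y else zc.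

Lemma mkseq_rigid_tail k :
  mkseq rigid_tail (3 * k.+1) = mkseq rigid_tail (3 * k) ++ [:: zc; y; zc].
Proof.
by rewrite mulnS addnC mkseq_add /mkseq /= /rigid_tail !(mulnC 3) !modnMDl.
Qed.

Lemma rigid_app_tail (W : wrd) : rigid (app W rigid_tail).
Proof.
apply: young_rigid => K; exists (size W.2 + 3 * K.+1) => b.
rewrite pref_app_ge ?leq_addr // addKn mkseq_rigid_tail -ext_cat.
set V := ext W _.
have -> : ext V [:: zc; y; zc] = ext (ext V [:: zc; y]) [:: zc] by rewrite ext_cat.
apply: young_child.
  by rewrite /V !size_ext size_mkseq; lia.
suff HV : forall b', young (size V.2) (ep (ext V [:: zc; y]) b').
  move=> b'; have [p [u [-> Hp]]] := HV b'; exists p, u; split => //.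
  by apply: leq_trans Hp; rewrite /V size_ext size_mkseq; lia.
exact: young_zc_y.
Qed.
End RigidPattern.

Lemma exists_rigid_tail : exists t : nat -> ER, forall w, rigid (app w t).
Proof.
have [m [Hm1 Hm2]] := interior_vertex; have [zc [c Ezc]] := endRP m.
have [y [q Ey]] := endRP (role c).
exists (rigid_tail zc y); apply: (rigid_app_tail (c := c)); first by rewrite Ezc.
by exists q.
Qed.

Section VertexTails.
Variable zI : bool -> ER.
Hypothesis HzI : forall b, exists q, endR (zI b) q = role b.

Definition side (b : bool) : bool := ~~ (endR (zI b) false == role b).

Lemma endR_side b : endR (zI b) (side b) = role b.
Proof.
by rewrite /side; case: eqP => // Hn; have [[] Hq] := HzI b.
Qed.

Lemma child_ep_side w b : child_ep w (zI b) (side b) = ep w b.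
Proof.
rewrite /child_ep endR_side; case: b => /=; last by rewrite eqxx.
by case: eqP => [/esym/ini_neq_ter | _] //; rewrite eqxx.
Qed.

(* [vertex_tail b] descends into copies of R always along the edge [zI]
   attached to the current copy of the endpoint [b] of the starting edge;
   [tail_side b k] records at which end of the k-th edge that vertex sits. *)
Definition tail_side (b : bool) (k : nat) : bool := iter k side b.
Definition vertex_tail (b : bool) : nat -> ER := fun k => zI (tail_side b k).

Lemma ext_mkseqS (w : wrd) f k : ext w (mkseq f k.+1) = ext (ext w (mkseq f k)) [:: f k].
Proof. by rewrite mkseqS -cats1 ext_cat. Qed.

Lemma ep_vertex_tail w b k :
  ep (ext w (mkseq (vertex_tail b) k)) (tail_side b k) = ep w b.
Proof.
elim: k => [|k IH]; first by rewrite ext_nil.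
by rewrite ext_mkseqS ep_ext1 /vertex_tail /tail_side iterS child_ep_side.
Qed.

Lemma vertex_tail_ends w b0 k b :
  ep (ext w (mkseq (vertex_tail b0) k.+1)) b = ep w b0 \/
  exists u, ep (ext w (mkseq (vertex_tail b0) k.+1)) b =
            inr (ext w (mkseq (vertex_tail b0) k), u).
Proof.
case: (eqVneq b (tail_side b0 k.+1)) => [->|Hb]; first by left; exact: ep_vertex_tail.
rewrite ext_mkseqS ep_ext1 /vertex_tail.
have attached s : endR (zI (tail_side b0 k)) b = role s -> child_ep
    (ext w (mkseq (vertex_tail b0) k)) (zI (tail_side b0 k)) b = ep w b0.
  move=> Hs; rewrite -(ep_vertex_tail w b0 k) -child_ep_side /child_ep Hs.
  by rewrite -(role_touch (endR_side _) Hs) endR_side.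
case: (child_epP (ext w (mkseq (vertex_tail b0) k)) (zI (tail_side b0 k)) b)
  => [[H _]|[H _]|[_ _ ->]]; last by right; eexists.
- by left; apply: (attached false).
- by left; apply: (attached true).
Qed.

Lemma vertex_tail_sim_ep (u1 u2 : wrd) b1 b2 :
  sim (app u1 (vertex_tail b1)) (app u2 (vertex_tail b2)) -> ep u1 b1 = ep u2 b2.
Proof.
move=> Hs; set m := maxn (size u1.2) (size u2.2).
have Hm1 : size u1.2 <= m by rewrite leq_maxl.
have Hm2 : size u2.2 <= m by rewrite leq_maxr.
have Hv1 p u : ep u1 b1 = inr (p, u) -> size p.2 < m.
  by move/ep_inr_size/leq_trans; apply.
have Hv2 p u : ep u2 b2 = inr (p, u) -> size p.2 < m.
  by move/ep_inr_size/leq_trans; apply.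
have [β1 [β2 E]] := Hs (m + 2).
rewrite !pref_app_ge ?(leq_trans _ (leq_addr 2 m)) // !addn2 !subSn ?leqW // in E.
have deep (u : wrd) b k : size (ext u (mkseq (vertex_tail b) k)).2 = size u.2 + k.
  by rewrite size_ext size_mkseq.
case: (vertex_tail_ends u1 b1 (m - size u1.2).+1 β1) => [E1|[x1 E1]];
case: (vertex_tail_ends u2 b2 (m - size u2.2).+1 β2) => [E2|[x2 E2]].
- by rewrite -E1 -E2.
- have := Hv1 _ _ (etrans (etrans (esym E1) E) E2).
  by rewrite deep; lia.
- have := Hv2 _ _ (etrans (etrans (esym E2) (esym E)) E1).
  by rewrite deep; lia.
rewrite E1 E2 in E.
have /= EQ := f_equal (fun v => if v is inr (p, _) then p else u1) E.
have T1 := ep_vertex_tail u1 b1 (m - size u1.2).+1; rewrite EQ in T1.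
case: (vertex_tail_ends u2 b2 (m - size u2.2) (tail_side b1 (m - size u1.2).+1))
  => [E3|[x3 E3]]; first by rewrite -T1 E3.
by rewrite E3 in T1; have := Hv1 _ _ (esym T1); rewrite deep; lia.
Qed.

Lemma pref_vertex_tail w b n : size w.2 <= n ->
  exists b', ep (pref (app w (vertex_tail b)) n) b' = ep w b.
Proof.
by move=> Hn; exists (tail_side b (n - size w.2)); rewrite pref_app_ge // ep_vertex_tail.
Qed.

Lemma ep_vertex_tail_sim (w w' : wrd) b b' : ep w b = ep w' b' ->
  sim (app w (vertex_tail b)) (app w' (vertex_tail b')).
Proof.
move=> Hv n; set v := ep w' b'.
have Conv (u : wrd) bu : ep u bu = v ->
  (exists β, ep (pref (app u (vertex_tail bu)) n) β = v) \/
  (exists p x, [/\ v = inr (p, x), n <= size p.2 &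
                   pref (app u (vertex_tail bu)) n = (p.1, take n p.2)]).
  move=> Hu; case: (leqP (size u.2) n) => Hn.
    by left; rewrite -Hu; exact: pref_vertex_tail.
  rewrite (pref_app_le _ (ltnW Hn)).
  case: (ep_take bu (ltnW Hn)) => [[β Hβ]|[p [x [Ev0 Hpn Ht He]]]].
    by left; exists β; rewrite Hβ.
  by right; exists p, x; rewrite -Hu Ht He.
case: (Conv w b Hv) => [[β1 H1]|[p1 [x1 [Ev1 Hn1 Hp1]]]];
case: (Conv w' b' erefl) => [[β2 H2]|[p2 [x2 [Ev2 Hn2 Hp2]]]].
- by exists β1, β2; rewrite H1 H2.
- by rewrite Ev2 in H1; have := ep_inr_size H1; rewrite size_pref ltnNge Hn2.
- by rewrite Ev1 in H2; have := ep_inr_size H2; rewrite size_pref ltnNge Hn1.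
rewrite Ev1 in Ev2; case: Ev2 => Ep _.
by exists false, false; rewrite Hp1 Hp2 Ep.
Qed.
End VertexTails.

Lemma exists_vertex_tails : exists T : bool -> nat -> ER,
  (forall w b n, size w.2 <= n -> exists b', ep (pref (app w (T b)) n) b' = ep w b) /\
  (forall w w' b b', ep w b = ep w' b' <-> proj (app w (T b)) = proj (app w' (T b'))).
Proof.
have [z0 [q0 H0]] := endRP (role false); have [z1 [q1 H1]] := endRP (role true).
pose zI b := if b then z1 else z0.
have HzI b : exists q, endR (zI b) q = role b by case: b; [exists q1 | exists q0].
exists (vertex_tail zI); split; first exact: pref_vertex_tail.
move=> w w' b b'; rewrite proj_eqP; split.
  exact: ep_vertex_tail_sim.
exact: vertex_tail_sim_ep.
Qed.

Definition canonical_on (f : X RS -> X RS) (w w' : wrd) :=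
  forall t, f (proj (app w t)) = proj (app w' t).

Lemma canonical_on_ext f w w' s :
  canonical_on f w w' -> canonical_on f (ext w s) (ext w' s).
Proof. by move=> H t; rewrite !app_ext H. Qed.

Lemma canonical_on_id w : canonical_on id w w.
Proof. by []. Qed.

Lemma canonical_on_inv f g w w' :
  canonical_on f w w' -> cancel f g -> canonical_on g w' w.
Proof. by move=> H Hg t; rewrite -H Hg. Qed.

Lemma seqapp_inj (y1 y2 : ER) s1 s2 t : y1 <> y2 ->
  seqapp (s1 ++ [:: y1]) t = seqapp (s2 ++ [:: y1]) t ->
  seqapp (s1 ++ [:: y2]) t = seqapp (s2 ++ [:: y2]) t -> s1 = s2.
Proof.
move=> Hy12.
have key a b : size a < size b ->
    seqapp (a ++ [:: y1]) t = seqapp (b ++ [:: y1]) t ->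
    seqapp (a ++ [:: y2]) t = seqapp (b ++ [:: y2]) t -> False.
  move=> Hab E1 E2.
  have := f_equal (fun f => f (size a)) E1; have := f_equal (fun f => f (size a)) E2.
  rewrite /seqapp !size_cat /= !addn1 ltnSn (ltn_trans Hab (ltnSn _)).
  by rewrite !nth_cat ltnn Hab subnn /= => Ea Eb; apply: Hy12; rewrite Ea Eb.
move=> E1 E2; case: (ltngtP (size s1) (size s2)) => Hs.
- by case: (key _ _ Hs E1 E2).
- by case: (key _ _ Hs (esym E1) (esym E2)).
apply: (@eq_from_nth _ y1) => // i Hi.
have := f_equal (fun f => f i) E1; rewrite /seqapp !size_cat /= -Hs.
rewrite (ltn_addr 1 Hi) !nth_cat -Hs Hi => E.
by rewrite (set_nth_default (t 0)) // E; apply: set_nth_default; rewrite -Hs.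
Qed.

(* Rigid points in [C(w)] pin the canonical image down, and varying the letter
   after [w] rules out the image being a proper prefix of another candidate. *)
Lemma canonical_on_uniq f w w1 w2 :
  canonical_on f w w1 -> canonical_on f w w2 -> w1 = w2.
Proof.
move=> H1 H2; have [t Ht] := exists_rigid_tail; have [y1 [y2 Hy12]] := two_edges.
have K yy : app (ext w2 [:: yy]) t = app (ext w1 [:: yy]) t.
  by apply: Ht; rewrite !app_ext -H1 -H2.
have /= E1 := f_equal fst (K y1).
have /= E1' := f_equal snd (K y1); have /= E2' := f_equal snd (K y2).
case: w1 w2 E1 E1' E2' {K H1 H2} => e1 s1 [e2 s2] /= -> E1 E2.
by rewrite (seqapp_inj Hy12 E1 E2).
Qed.

Definition canonical_beyond (f : X RS -> X RS) (M C : nat) :=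
  forall w : wrd, M <= size w.2 ->
    exists w', canonical_on f w w' /\ size w'.2 <= size w.2 + C.

Lemma rearrangement_canonical_beyond f : rearrangement f ->
  exists L C, canonical_beyond f L C.
Proof.
move=> [_ [cov [Hcov [_ Hcan]]]]; have [t Ht] := exists_rigid_tail.
exists (\max_(cc <- cov) size cc.1.2), (\max_(cc <- cov) size cc.2.2) => w Hw.
have [cc [Hin [om' [Hp /esym/Ht Eom']]]] := Hcov (proj (app w t)).
rewrite Eom' in Hp.
have Hc1 : size cc.1.2 <= size w.2.
  by apply: leq_trans Hw; exact: (@leq_bigmax_seq _ cov xpredT (fun cc => size cc.1.2) cc Hin isT).
have Ew : cc.1 = (w.1, take (size cc.1.2) w.2) by rewrite -{1}Hp pref_app_le.
have Hcc : canonical_on f cc.1 cc.2.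
  move=> t'; have [_ H] := Hcan cc Hin.
  by rewrite H ?canon_app //; exact: hasprefix_app.
exists (ext cc.2 (drop (size cc.1.2) w.2)); split.
  by have := canonical_on_ext (drop (size cc.1.2) w.2) Hcc; rewrite {1}Ew ext_take_drop.
rewrite size_ext size_drop addnC leq_add ?leq_subr //.
exact: (@leq_bigmax_seq _ cov xpredT (fun cc => size cc.2.2) cc Hin isT).
Qed.

Lemma canonical_beyond_mono f M M' C C' : M <= M' -> C <= C' ->
  canonical_beyond f M C -> canonical_beyond f M' C'.
Proof.
move=> HM HC Hd w Hw; have [w' [Hc Hs]] := Hd w (leq_trans HM Hw).
by exists w'; split => //; apply: leq_trans Hs _; rewrite leq_add2l.
Qed.

Lemma finite_canonical_beyond (H : (X RS -> X RS) -> Prop) :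
  (forall f, H f -> rearrangement f) ->
  (exists n (l : nat -> X RS -> X RS), forall f, H f -> exists i, i < n /\ f = l i) ->
  exists M C, forall f, H f -> canonical_beyond f M C.
Proof.
move=> Hsub [n [l Hl]].
suff [M [C Hd]] : exists M C, forall i, i < n -> H (l i) -> canonical_beyond (l i) M C.
  by exists M, C => f /[dup] Hf /Hl [i [Hi Ef]]; rewrite Ef in Hf *; exact: Hd.
elim: n {Hl} => [|n [M [C IH]]]; first by exists 0, 0.
case: (classic (H (l n))) => Hn; last first.
  by exists M, C => i; rewrite ltnS leq_eqVlt => /orP [/eqP -> //|]; exact: IH.
have [L [C' HL]] := rearrangement_canonical_beyond (Hsub _ Hn).
exists (maxn M L), (maxn C C') => i; rewrite ltnS leq_eqVlt => /orP [/eqP -> _|Hi Hli].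
  exact: canonical_beyond_mono (leq_maxr _ _) (leq_maxr _ _) HL.
exact: canonical_beyond_mono (leq_maxl _ _) (leq_maxl _ _) (IH i Hi Hli).
Qed.

Section InvariantExpansion.
Variable H : (X RS -> X RS) -> Prop.
Hypothesis Hsub : forall f, H f -> rearrangement f.
Hypothesis H1 : H id.
Hypothesis Hmul : forall f g, H f -> H g -> H (f \o g).
Hypothesis Hinv : forall f, H f -> exists g, [/\ H g, cancel f g & cancel g f].
Variables M C : nat.
Hypothesis HD : forall f, H f -> canonical_beyond f M C.

Definition canon_image (f : X RS -> X RS) (w : wrd) : wrd :=
  epsilon (inhabits w) (canonical_on f w).

Lemma canon_imageE f w w' : canonical_on f w w' -> canon_image f w = w'.
Proof. by move=> Hc; apply: (canonical_on_uniq _ Hc); apply: epsilon_spec; exists w'. Qed.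

Lemma canon_image_deep f w : H f -> M <= size w.2 -> canonical_on f w (canon_image f w).
Proof. by move=> Hf /(HD Hf) [w' [Hc _]]; rewrite (canon_imageE Hc). Qed.

Lemma canon_imageK f g w : H f -> cancel f g -> M <= size w.2 ->
  canon_image g (canon_image f w) = w.
Proof. by move=> Hf Hfg Hw; apply/canon_imageE/canonical_on_inv/Hfg/canon_image_deep. Qed.

(* [v] lies below the image under every [f] of some edge of level [M]; the
   edges of the sought expansion are the minimal such words. *)
Definition good (v : wrd) := forall f, H f ->
  exists d : wrd, size d.2 = M /\ exists s, v = ext (canon_image f d) s.

Lemma good_deep v : good v -> M <= size v.2.
Proof.
move=> /(_ _ H1) [d [Hd [s ->]]].
by rewrite (canon_imageE (canonical_on_id d)) size_ext Hd leq_addr.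
Qed.

(* A long word is the image under [f] of a word [t] of length at least [M],
   since otherwise padding [t] to length [M] would move it too far. *)
Lemma good_long v : M + C < size v.2 -> good v.
Proof.
move=> Hv f Hf; have [h [Hh Hfh Hhf]] := Hinv Hf.
have HvM : M <= size v.2 by apply: leq_trans (ltnW Hv); rewrite leq_addr.
have [t [Hvt _]] := HD Hh HvM.
have Hft : canonical_on f t v := canonical_on_inv Hvt Hhf.
case: (leqP M (size t.2)) => Ht.
  exists (t.1, take M t.2); split; first by rewrite /= size_takel.
  exists (drop M t.2); apply: (canonical_on_uniq Hft).
  rewrite -{1}(ext_take_drop t M); apply/canonical_on_ext/canon_image_deep => //.
  by rewrite /= size_takel.
have [y _] := two_edges; set d := ext t (nseq (M - size t.2) y).
have Hd : size d.2 = M by rewrite size_ext size_nseq subnKC // ltnW.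
have [w' [Hdw' Hs]] := HD Hf (eq_leq (esym Hd)).
have E := canonical_on_uniq Hdw' (canonical_on_ext (nseq (M - size t.2) _) Hft).
by move: Hs; rewrite E size_ext Hd; lia.
Qed.

Lemma good_image g v : H g -> good v -> good (canon_image g v).
Proof.
move=> Hg HP f Hf; have [gi [Hgi Hggi Hgig]] := Hinv Hg.
have Hh := Hmul Hgi Hf.
have [d [Hd [s Ev]]] := HP _ Hh.
have HdM : M <= size d.2 by rewrite Hd.
have Hc : canonical_on g (canon_image (gi \o f) d) (canon_image f d).
  by move=> t; rewrite -(canon_image_deep Hh HdM t) /= Hgig; exact: canon_image_deep.
by exists d; split => //; exists s; apply: canon_imageE; rewrite Ev; exact: canonical_on_ext.
Qed.

Lemma minimal_good_image g v : H g -> minimal good v -> minimal good (canon_image g v).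
Proof.
move=> Hg [HPv Hmin]; split; first exact: good_image.
move=> j Hj Hq; have [gi [Hgi Hggi Hgig]] := Hinv Hg.
set u := canon_image g v in Hj Hq *.
set q : wrd := (u.1, take j u.2) in Hq.
have Huv : canonical_on gi u v := canonical_on_inv (canon_image_deep Hg (good_deep HPv)) Hggi.
have Ev : v = ext (canon_image gi q) (drop j u.2).
  apply: (canonical_on_uniq Huv); rewrite -{1}(ext_take_drop u j).
  exact/canonical_on_ext/canon_image_deep/good_deep.
apply: (Hmin (size (canon_image gi q).2)).
  by rewrite Ev size_ext size_drop; lia.
have -> : (v.1, take (size (canon_image gi q).2) v.2) = canon_image gi q.
  by rewrite {1 2}Ev take_ext_size.
exact: good_image.
Qed.

Lemma take_mkseq (f : nat -> ER) j m : j <= m -> take j (mkseq f m) = mkseq f j.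
Proof. by move=> Hjm; rewrite /mkseq -map_take take_iota (minn_idPl Hjm). Qed.

Lemma minimal_good_prefix (om : Omega RS) : exists w, minimal good w /\ hasprefix om w.
Proof.
have minimal_below n : good (pref om n) -> exists w, minimal good w /\ hasprefix om w.
  elim/ltn_ind: n => n IH Hn.
  case: (classic (exists j, j < n /\ good (pref om j))) => [[j [Hj Hg]]|Hno].
    exact: IH Hj Hg.
  exists (pref om n); split; last by rewrite /hasprefix size_pref.
  split => // j; rewrite size_pref => Hj Hg; apply: Hno; exists j; split => //.
  by move: Hg; rewrite /pref /= take_mkseq // ltnW.
by apply: (minimal_below (M + C).+1); apply: good_long; rewrite size_pref.
Qed.

Variable S : seq wrd.
Hypothesis HS : forall w, w \in S <-> minimal good w.

Lemma deep_mem w : w \in S -> M <= size w.2.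
Proof. by move=> /HS [/good_deep]. Qed.

Lemma canon_image_mem g w : H g -> w \in S -> canon_image g w \in S.
Proof. by move=> Hg /HS Hw; apply/HS; exact: minimal_good_image. Qed.

Lemma is_vtx_ep w b : w \in S -> is_vtx S (ep w b).
Proof.
move=> Hw; case Ee: (ep w b) => [v|[p u]] //=.
have [Hp1 [z [s Hs]] /eqP Hu1 /eqP Hu2] := ep_inr_prefix Ee.
do 2!split => //; exists w; split => //; split; first by rewrite Hp1.
by rewrite Hs size_cat /= take_size_cat //; split => //; lia.
Qed.

(* Follow the tail running into [ep w0 b] until it enters an edge of [S]. *)
Lemma ep_tail_mem w0 b : exists2 w, w \in S &
  (exists b', ep w b' = ep w0 b) \/ (size w.2 < size w0.2 /\ (w0.1, take (size w.2) w0.2) = w).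
Proof.
have [T [HT _]] := exists_vertex_tails.
have [w [/HS Hw Hp]] := minimal_good_prefix (app w0 (T b)).
exists w => //; case: (ltnP (size w.2) (size w0.2)) => Hs.
  by right; split => //; rewrite -(pref_app_le (T b) (ltnW Hs)).
have [b' Hb'] := HT w0 b (size w.2) Hs.
by left; exists b'; rewrite -Hb' -{1}Hp.
Qed.

Lemma is_vtxP p : is_vtx S p -> exists w b, w \in S /\ ep w b = p.
Proof.
case: p => [v|[w0 u]] /= => [_|[Hu1 [Hu2 [w' [Hw' [E1 [Hlt Htk]]]]]]].
  have [e [b <-]] := ep_G0P v.
  by have [w Hw [[b' Hb'] | []]] := ep_tail_mem (e, [::]) b; first by exists w, b'.
have [z [β Eβ]] := endRP u.
have Ez : ep (ext w0 [:: z]) β = inr (w0, u).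
  by rewrite ep_ext1 /child_ep Eβ; do 2!case: eqP => //.
rewrite -Ez; have [w Hw [[b' Hb'] | [Hs Ew]]] := ep_tail_mem (ext w0 [:: z]) β.
  by exists w, b'.
have [_ Hmin] := (HS w').1 Hw'; have [Hgw _] := (HS w).1 Hw.
rewrite size_ext addn1 ltnS /= in Hs.
case: (Hmin (size w.2)); first exact: leq_ltn_trans Hs Hlt.
move: Ew; rewrite /ext /= takel_cat // => Ew.
by rewrite E1 -(take_takel _ Hs) Htk Ew.
Qed.

Lemma ep_canon_image g w w' b b' : H g -> w \in S -> w' \in S ->
  ep w b = ep w' b' -> ep (canon_image g w) b = ep (canon_image g w') b'.
Proof.
move=> Hg Hw Hw'; have [T [_ HT]] := exists_vertex_tails.
rewrite !HT => E.
by rewrite -(canon_image_deep Hg (deep_mem Hw)) -(canon_image_deep Hg (deep_mem Hw')) E.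
Qed.

Definition is_end_of (p : vtx RS) (o : option (wrd * bool)) :=
  if o is Some (w, b) then w \in S /\ ep w b = p else False.

Definition vertex_image (g : X RS -> X RS) (p : vtx RS) : vtx RS :=
  if epsilon (inhabits None) (is_end_of p) is Some (w, b)
  then ep (canon_image g w) b else p.

Lemma vertex_image_ep g w b : H g -> w \in S ->
  vertex_image g (ep w b) = ep (canon_image g w) b.
Proof.
move=> Hg Hw; rewrite /vertex_image.
have : is_end_of (ep w b) (epsilon (inhabits None) (is_end_of (ep w b))).
  by apply: epsilon_spec; exists (Some (w, b)).
by case: (epsilon _ _) => [[w1 b1] [Hw1 E]|] //; apply: ep_canon_image.
Qed.

Lemma canon_image_graph_aut g : H g -> graph_aut S (canon_image g).
Proof.
move=> Hg; have [gi [Hgi Hggi Hgig]] := Hinv Hg.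
exists (vertex_image g); split; [|split].
- exists (canon_image gi) => w Hw; rewrite !canon_image_mem //.
  by rewrite !canon_imageK // deep_mem.
- exists (vertex_image gi) => p /is_vtxP [w [b [Hw <-]]].
  rewrite !vertex_image_ep ?canon_image_mem // !canon_imageK ?deep_mem //.
  by split; [|split] => //; apply: (is_vtx_ep b); exact: canon_image_mem.
by move=> w Hw b; rewrite vertex_image_ep.
Qed.

Lemma in_Aut_minimal_good g : H g -> in_Aut S g.
Proof.
move=> Hg; split; first exact: Hsub.
exists (canon_image g); split; first exact: canon_image_graph_aut.
move=> w Hw om /hasprefixP [t ->].
by rewrite canon_app; exact: (canon_image_deep Hg (deep_mem Hw)).
Qed.
End InvariantExpansion.
End Expanding.

Theorem theorem2p9 (RS : repl_system) (Hexp : expanding RS)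
  (H : (X RS -> X RS) -> Prop)
  (Hsub : forall f, H f -> rearrangement f)
  (H1 : H (fun x => x))
  (Hmul : forall f g, H f -> H g -> H (fun x => f (g x)))
  (Hinv : forall f, H f -> exists g, H g /\ (forall x, g (f x) = x) /\ (forall x, f (g x) = x))
  (Hfin : exists (n : nat) (l : nat -> X RS -> X RS), forall f, H f -> exists i, i < n /\ f = l i) :
  exists S : seq (word RS), expansion S /\ forall f, H f -> in_Aut S f.
Proof.
have Hinv' f : H f -> exists g, [/\ H g, cancel f g & cancel g f].
  by move=> /Hinv [g [Hg [Hfg Hgf]]]; exists g.
have [M [C HD]] := finite_canonical_beyond Hexp Hsub Hfin.
have [S [HS Hmem]] := expansion_minimal (good_long Hexp Hinv' HD).
by exists S; split => // f /(in_Aut_minimal_good Hexp Hsub H1 Hmul Hinv' HD Hmem).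
Qed.
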